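(* Let $M$ be a $4$-dimensional manifold with local coordinates $(x^1,\dots,x^4)$, $e_i=\partial/\partial x^i$, and Riemannian metric $g$ with components \[(g_{ij})=\begin{pmatrix} A&B&C&B\\ B&A&B&C\\ C&B&A&B\\ B&C&B&A\end{pmatrix},\] $A,B,C$ smooth functions with $A>C>B>0$. Let $P$ be the almost product structure with component matrix having rows $(0,0,1,0),(0,0,0,1),(1,0,0,0),(0,1,0,0)$. Then $(M,g,P)$ belongs to the class $\mathcal{W}_2$ if and only if \[(A+C)(C_3-A_1)=2B(B_3-B_1),\quad C_3-A_1=A_3-C_1,\quad (A+C)(C_4-A_2)=2B(B_4-B_2),\quad C_4-A_2=A_4-C_2,\] where $A_i=\partial A/\partial x^i$, $B_i=\partial B/\partial x^i$, $C_i=\partial C/\partial x^i$.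
   Context: Let $\nabla$ be the Levi-Civita connection of $g$, $F(x,y,z)=g((\nabla_xP)y,z)$, and $\theta(x)=g^{ij}F(e_i,e_j,x)$ with $(g^{ij})$ the inverse of $(g_{ij})$. The manifold $(M,g,P)$ belongs to the class $\mathcal{W}_2$ if for all vector fields $x,y,z$: \[F(x,y,Pz)+F(y,z,Px)+F(z,x,Py)=0\quad\text{and}\quad \theta(z)=0.\] *)

(* Local-coordinate setting:
   the chart domain of M is an open set U of R^4 = 'rV[R]_4. *)
From HB Require Import structures.
From mathcomp Require Import all_boot all_order all_algebra.
From mathcomp Require Import all_classical all_reals all_analysis.
Set Implicit Arguments. Unset Strict Implicit. Unset Printing Implicit Defensive.
Import Order.TTheory GRing.Theory Num.Theory.
Import numFieldNormedType.Exports.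
Local Open Scope ring_scope.
Local Open Scope classical_set_scope.

Section Defs.
Variable R : realType.
Notation V := 'rV[R]_4.

Definition ecoord (i : 'I_4) : V := delta_mx 0 i.

(* coordinate index x^(n+1) <-> n : 'I_4 *)
Definition ix (n : nat) : 'I_4 := inord n.

Definition pd (i : 'I_4) (f : V -> R) : V -> R := fun x => 'D_(ecoord i) f x.

Fixpoint pd_iter (l : seq 'I_4) (f : V -> R) : V -> R :=
  match l with [::] => f | i :: l' => pd i (pd_iter l' f) end.

Definition smooth_on (U : set V) (f : V -> R) : Prop :=
  forall (l : seq 'I_4) x, U x -> differentiable (pd_iter l f) x.

Definition gmat (g : 'I_4 -> 'I_4 -> V -> R) (x : V) : 'M[R]_4 :=
  \matrix_(i, j) g i j x.
Definition ginv (g : 'I_4 -> 'I_4 -> V -> R) (x : V) : 'M[R]_4 := invmx (gmat g x).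

(* Christoffel symbols of the Levi-Civita connection:
   nabla_{e_k} e_m = sum_l Gam^l_{km} e_l *)
Definition Gam1 g (k m j : 'I_4) (x : V) : R :=
  2^-1 * (pd k (g m j) x + pd m (g k j) x - pd j (g k m) x).
Definition Gam g (l k m : 'I_4) (x : V) : R :=
  \sum_s ginv g x l s * Gam1 g k m s x.

(* components of nabla_{e_k} P for a structure P with constant components P^l_i
   (P e_i = sum_l P l i e_l) *)
Definition covP g (P : 'M[R]_4) (k l i : 'I_4) (x : V) : R :=
  \sum_m Gam g l k m x * P m i - \sum_m P l m * Gam g m k i x.

(* F(e_k, e_i, e_j) = g((nabla_{e_k} P) e_i, e_j) *)
Definition Fcomp g P (k i j : 'I_4) (x : V) : R :=
  \sum_l covP g P k l i x * g l j x.

Definition Fat g P (x : V) (u v w : V) : R :=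
  \sum_k \sum_i \sum_j u 0 k * v 0 i * w 0 j * Fcomp g P k i j x.

Definition Pv (P : 'M[R]_4) (w : V) : V := \row_l \sum_m P l m * w 0 m.

Definition theta g P (x : V) (w : V) : R :=
  \sum_i \sum_j ginv g x i j * Fat g P x (ecoord i) (ecoord j) w.

Definition W2 g P (U : set V) : Prop :=
  forall x, U x -> forall u v w : V,
    Fat g P x u v (Pv P w) + Fat g P x v w (Pv P u) + Fat g P x w u (Pv P v) = 0
    /\ theta g P x w = 0.

(* the metric of the paper: (g_ij) circulant with first row (A, B, C, B) *)
Definition gABC (A B C : V -> R) (i j : 'I_4) : V -> R :=
  let d := ((i + 4 - j) %% 4)%N in
  if d == 0%N then A else if d == 2%N then C else B.

Definition Pmat : 'M[R]_4 :=
  \matrix_(i, j) (if ((i + 4 - j) %% 4)%N == 2%N then 1 else 0).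

End Defs.

From mathcomp Require Import all_boot all_order all_algebra.
From mathcomp Require Import all_classical all_reals all_analysis.
From mathcomp Require Import ring lra.
Import Order.TTheory GRing.Theory Num.Theory.
Import numFieldNormedType.Exports.

Set Implicit Arguments.
Unset Strict Implicit.
Unset Printing Implicit Defensive.

Local Open Scope ring_scope.

(* At each point g is the circulant matrix circ(A, B, C) and P is the coordinate
   involution x^i <-> x^(i+2), which preserves g.  Because P has constant
   components, F(e_k, e_i, e_j) is a difference of two Christoffel symbols of the
   first kind, and for a P-invariant metric the cyclic sum F(x, y, Pz) + ...
   then vanishes identically; so W_2 reduces to theta = 0.  Inverting the
   circulant explicitly, theta(e_l) = W_l / ((A + C)^2 - 4 B^2) + X_l / (A - C)
   with W_l odd and X_l even under l <-> l + 2, so theta = 0 amounts to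
   W_l = X_l = 0 for l = 1, 2: these are the four stated equations. *)

Definition o0 : 'I_4 := @Ordinal 4 0 isT.
Definition o1 : 'I_4 := @Ordinal 4 1 isT.
Definition o2 : 'I_4 := @Ordinal 4 2 isT.
Definition o3 : 'I_4 := @Ordinal 4 3 isT.

Lemma ord4_ind (P : 'I_4 -> Prop) : P o0 -> P o1 -> P o2 -> P o3 -> forall i, P i.
Proof.
by move=> ? ? ? ? [[|[|[|[|n]]]] Hi] //; rewrite (bool_irrelevance Hi isT).
Qed.

Lemma ixE : [/\ ix 0 = o0, ix 1 = o1, ix 2 = o2 & ix 3 = o3].
Proof. by split; apply/val_inj; rewrite /= inordK. Qed.

Lemma sum_ord4 (V : nmodType) (f : 'I_4 -> V) :
  \sum_i f i = f o0 + f o1 + f o2 + f o3.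
Proof.
rewrite !big_ord_recr big_ord0 /= add0r.
by congr (_ + _ + _ + _); congr f; apply/val_inj.
Qed.

Lemma sum3_rot (I : finType) (V : nmodType) (f : I -> I -> I -> V) :
  \sum_k \sum_i \sum_j f k i j = \sum_j \sum_k \sum_i f k i j.
Proof. by under eq_bigr do rewrite exchange_big; rewrite exchange_big. Qed.

Definition antipode (i : 'I_4) : 'I_4 := Ordinal (ltn_pmod (i + 2) (isT : (0 < 4)%N)).

Lemma antipodeE :
  (antipode o0 = o2) * (antipode o1 = o3) * (antipode o2 = o0) * (antipode o3 = o1).
Proof. by do !split; apply/val_inj. Qed.

Lemma antipodeK : involutive antipode.
Proof. by elim/ord4_ind; apply/val_inj. Qed.

Section ChristoffelCyclic.
Variable R : realFieldType.

(* [d k m j] stands for the derivative of g_mj along x^k and [G] for the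
   Christoffel symbols of the first kind; the hypotheses say that g is symmetric
   and invariant under the coordinate involution [s]. *)
Lemma lowered_christoffel_cyclic (I : Type) (s : I -> I) (d : I -> I -> I -> R) :
  involutive s -> (forall k m j, d k m j = d k j m) ->
  (forall k m j, d k (s m) (s j) = d k m j) ->
  let G k m j := 2^-1 * (d k m j + d m k j - d j k m) in
  forall k i j,
  (G k (s i) (s j) - G k i j) + (G i (s j) (s k) - G i j k)
  + (G j (s k) (s i) - G j k i) = 0.
Proof.
move=> sK dC dI G k i j; rewrite /G.
have := dI (s i) (s k) j; have := dC (s i) j (s k).
have := dI (s j) (s i) k; have := dC (s j) k (s i).
have := dI (s k) (s j) i; have := dC (s k) i (s j).
rewrite !sK dI (dI i) (dI j) (dC k i) (dC i j) (dC j k).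
lra.
Qed.

End ChristoffelCyclic.

Section Circulant.
Variable R : comRingType.

Definition circ (a b c : R) : 'M[R]_4 :=
  \matrix_(i, j) (let d := ((i + 4 - j) %% 4)%N in
                  if d == 0%N then a else if d == 2%N then c else b).

Lemma circ_mul a b c a' b' c' :
  circ a b c *m circ a' b' c' =
  circ (a * a' + 2 * b * b' + c * c') (a * b' + b * a' + b * c' + c * b')
       (a * c' + 2 * b * b' + c * a').
Proof.
apply/matrixP => i j; rewrite [LHS]mxE sum_ord4.
by elim/ord4_ind: i; elim/ord4_ind: j; rewrite !mxE /=; ring.
Qed.

Lemma circ1 : circ 1 0 0 = 1%:M.
Proof. by apply/matrixP => i j; rewrite !mxE; elim/ord4_ind: i; elim/ord4_ind: j. Qed.

End Circulant.

Section CirculantField.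
Variable R : realFieldType.

(* circ a b c has eigenvalues a + c + 2b, a + c - 2b (on (1,1,1,1) and
   (1,-1,1,-1)) and a - c (twice); inverting them gives these entries. *)
Definition circ_inv (a b c : R) : 'M[R]_4 :=
  let D := (a + c) ^+ 2 - 4 * b ^+ 2 in
  let s := (a + c) / D in let t := (a - c)^-1 in
  circ ((s + t) / 2) (- (b / D)) ((s - t) / 2).

Lemma mul_circ_inv a b c : (a + c) ^+ 2 != 4 * b ^+ 2 -> a != c ->
  circ a b c *m circ_inv a b c = 1%:M.
Proof.
rewrite -subr_eq0 -(subr_eq0 a) => D0 e0.
by rewrite circ_mul -circ1; congr circ; field; rewrite ?D0 ?e0 ?pnatr_eq0.
Qed.

Lemma circ_nondegenerate (a b c : R) : 0 < b -> b < c -> c < a ->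
  (a + c) ^+ 2 != 4 * b ^+ 2 /\ a != c.
Proof.
move=> b0 bc ca; split; last by rewrite gt_eqF.
rewrite -subr_eq0.
have -> : (a + c) ^+ 2 - 4 * b ^+ 2 = (a + c - 2 * b) * (a + c + 2 * b) by ring.
by rewrite mulf_neq0 // gt_eqF //; lra.
Qed.

Lemma theta_pair_eq0 (a b c e D A0 A2 B0 B2 C0 C2 : R) : D != 0 -> e != 0 ->
  ((a + c) * (A2 + C2 - A0 - C0) - 4 * b * (B2 - B0)) / D
    + (A2 + A0 - C2 - C0) / e = 0 /\
  ((a + c) * (A0 + C0 - A2 - C2) - 4 * b * (B0 - B2)) / D
    + (A0 + A2 - C0 - C2) / e = 0 <->
  (a + c) * (C2 - A0) = 2 * b * (B2 - B0) /\ C2 - A0 = A2 - C0.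
Proof.
move=> D0 e0.
set W := (a + c) * (C2 - A0) - 2 * b * (B2 - B0).
set X := A2 + A0 - C2 - C0.
have [-> -> ->] :
    [/\ (a + c) * (A2 + C2 - A0 - C0) - 4 * b * (B2 - B0) = 2 * W + (a + c) * X,
        (a + c) * (A0 + C0 - A2 - C2) - 4 * b * (B0 - B2) = - (2 * W + (a + c) * X)
      & A0 + A2 - C0 - C2 = X].
  by split; rewrite /W /X; ring.
rewrite mulNr; set Q := (2 * W + (a + c) * X) / D; set Y := X / e.
split=> [[h1 h2] | [hW hX]].
  have /eqP : Y = 0 by lra.
  rewrite mulf_eq0 invr_eq0 (negbTE e0) orbF => /eqP X0.
  have /eqP : Q = 0 by lra.
  rewrite /Q X0 mulr0 addr0 !mulf_eq0 invr_eq0 (negbTE D0) pnatr_eq0 /= orbF.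
  by move=> /eqP W0; split; rewrite /W /X in W0 X0; lra.
have W0 : W = 0 by rewrite /W hW subrr.
have X0 : X = 0 by rewrite /X; lra.
by rewrite /Q /Y W0 X0 !(mulr0, mul0r, addr0, oppr0).
Qed.

Lemma sum_circ_christoffel a b c (dA dB dC : 'I_4 -> R) l :
  let d k m j := circ (dA k) (dB k) (dC k) m j in
  let G k m j := 2^-1 * (d k m j + d m k j - d j k m) in
  let m := antipode l in
  \sum_i \sum_j circ a b c i j * (G i (antipode j) l - G i j m) =
  2 * (a * dA m + 2 * b * dB m + c * dC m - c * dA l - 2 * b * dB l - a * dC l).
Proof. by elim/ord4_ind: l; rewrite /= !sum_ord4 !antipodeE !mxE /=; field. Qed.

End CirculantField.

Arguments theta_pair_eq0 {R a b c e D A0 A2 B0 B2 C0 C2}.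

Section Tensors.
Variable R : realType.
Implicit Types (g : 'I_4 -> 'I_4 -> 'rV[R]_4 -> R) (P : 'M[R]_4) (x w : 'rV[R]_4).

Lemma sum_ecoord (f : 'I_4 -> R) i : \sum_k ecoord R i 0 k * f k = f i.
Proof.
rewrite (bigD1 i) //= big1 => [|k /negbTE nki]; first by rewrite mxE !eqxx mul1r addr0.
by rewrite mxE nki andbF mul0r.
Qed.

Lemma Fat_ecoord g P x i j w :
  Fat g P x (ecoord R i) (ecoord R j) w = \sum_l w 0 l * Fcomp g P i j l x.
Proof.
rewrite /Fat -(sum_ecoord (fun k => \sum_l w 0 l * Fcomp g P k j l x) i).
apply: eq_bigr => k _.
rewrite -(sum_ecoord (fun i' => \sum_l w 0 l * Fcomp g P k i' l x) j) mulr_sumr.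
apply: eq_bigr => i' _; rewrite !mulr_sumr; apply: eq_bigr => l _; ring.
Qed.

Lemma theta_decomp g P x w :
  theta g P x w = \sum_l w 0 l * theta g P x (ecoord R l).
Proof.
rewrite /theta; under eq_bigr do under eq_bigr do rewrite Fat_ecoord mulr_sumr.
under eq_bigr do rewrite exchange_big /=.
rewrite exchange_big /=; apply: eq_bigr => l _.
rewrite mulr_sumr; apply: eq_bigr => i _; rewrite mulr_sumr; apply: eq_bigr => j _.
by rewrite Fat_ecoord sum_ecoord mulrCA.
Qed.

Lemma Fcomp_Gam1 g P x k i j :
  gmat g x \in unitmx -> (gmat g x)^T = gmat g x ->
  P^T *m gmat g x = gmat g x *m P^T ->
  Fcomp g P k i j x = \sum_m P m i * Gam1 g k m j x - \sum_m Gam1 g k i m x * P j m.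
Proof.
set G := gmat g x => Gu Gsym PG.
pose L : 'M[R]_4 := \matrix_(m, s) Gam1 g k m s x.
pose X := invmx G *m L^T.
have covPE l : covP g P k l i x = (X *m P - P *m X) l i.
  rewrite /covP !mxE; congr (_ - _); apply: eq_bigr => m _; rewrite !mxE;
    congr (_ * _); apply: eq_bigr => s _; rewrite !mxE //.
have -> : Fcomp g P k i j x = ((X *m P - P *m X)^T *m G) i j.
  by rewrite /Fcomp mxE; apply: eq_bigr => l _; rewrite covPE !mxE.
have -> : (X *m P - P *m X)^T *m G = P^T *m L - L *m P^T.
  rewrite /X raddfB /= !trmx_mul trmxK trmx_inv Gsym mulmxBl.
  by rewrite -!mulmxA mulVmx // mulmx1 PG !mulmxA -[L *m _ *m G]mulmxA mulVmx ?mulmx1.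
by rewrite !mxE; congr (_ - _); apply: eq_bigr => m _; rewrite !mxE.
Qed.

End Tensors.

Section AntipodalStructure.
Variable R : realType.

Lemma PmatE i j : Pmat R i j = (i == antipode j)%:R.
Proof. by rewrite mxE; elim/ord4_ind: i; elim/ord4_ind: j. Qed.

Lemma PmatC i j : Pmat R i j = Pmat R j i.
Proof. by rewrite !mxE; elim/ord4_ind: i; elim/ord4_ind: j. Qed.

Lemma Pmat_tr : (Pmat R)^T = Pmat R.
Proof. by apply/matrixP => i j; rewrite mxE PmatC. Qed.

Lemma sum_Pmat_l (f : 'I_4 -> R) i : \sum_m Pmat R m i * f m = f (antipode i).
Proof.
rewrite (bigD1 (antipode i)) //= big1 => [|m /negbTE nmi].
  by rewrite PmatE eqxx mul1r addr0.
by rewrite PmatE nmi mul0r.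
Qed.

Lemma sum_Pmat_r (f : 'I_4 -> R) i : \sum_m f m * Pmat R i m = f (antipode i).
Proof. by under eq_bigr do rewrite PmatC mulrC; rewrite sum_Pmat_l. Qed.

Lemma Pv_Pmat w j : Pv (Pmat R) w 0 j = w 0 (antipode j).
Proof. by rewrite mxE; under eq_bigr do rewrite PmatC; rewrite sum_Pmat_l. Qed.

Variables (g : 'I_4 -> 'I_4 -> 'rV[R]_4 -> R) (x : 'rV[R]_4).
Hypotheses (g_sym : forall m j, g m j = g j m)
           (g_antipode : forall m j, g (antipode m) (antipode j) = g m j)
           (g_unit : gmat g x \in unitmx).
Local Notation F k i j := (Fcomp g (Pmat R) k i j x).

Lemma Pmat_gmat : (Pmat R)^T *m gmat g x = gmat g x *m (Pmat R)^T.
Proof.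
rewrite Pmat_tr; apply/matrixP => i j; rewrite [LHS]mxE [RHS]mxE.
under eq_bigr do rewrite PmatC; under [RHS]eq_bigr do rewrite PmatC.
rewrite sum_Pmat_l sum_Pmat_r !mxE.
by rewrite -[in g i _](antipodeK i) g_antipode.
Qed.

Lemma Fcomp_Pmat k i j :
  F k i j = Gam1 g k (antipode i) j x - Gam1 g k i (antipode j) x.
Proof.
rewrite Fcomp_Gam1 ?Pmat_gmat //; last first.
  by apply/matrixP => m j'; rewrite !mxE g_sym.
by rewrite sum_Pmat_l sum_Pmat_r.
Qed.

Lemma Fcomp_Pmat_cyclic k i j :
  F k i (antipode j) + F i j (antipode k) + F j k (antipode i) = 0.
Proof.
rewrite !Fcomp_Pmat !antipodeK.
have dC k' m j' : pd k' (g m j') x = pd k' (g j' m) x by rewrite g_sym.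
have dI k' m j' : pd k' (g (antipode m) (antipode j')) x = pd k' (g m j') x.
  by rewrite g_antipode.
exact: (lowered_christoffel_cyclic antipodeK dC dI k i j).
Qed.

Lemma Fat_Pv_Pmat u v w :
  Fat g (Pmat R) x u v (Pv (Pmat R) w) =
  \sum_k \sum_i \sum_j u 0 k * v 0 i * w 0 j * F k i (antipode j).
Proof.
apply: eq_bigr => k _; apply: eq_bigr => i _.
rewrite (reindex_inj (can_inj antipodeK)); apply: eq_bigr => j _.
by rewrite Pv_Pmat antipodeK.
Qed.

Lemma Fat_Pmat_cyclic u v w :
  Fat g (Pmat R) x u v (Pv (Pmat R) w) + Fat g (Pmat R) x v w (Pv (Pmat R) u)
  + Fat g (Pmat R) x w u (Pv (Pmat R) v) = 0.
Proof.
rewrite !Fat_Pv_Pmat [X in _ + X + _]sum3_rot.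
rewrite [X in _ + _ + X]sum3_rot [X in _ + _ + X]sum3_rot.
rewrite -!big_split /=; apply: big1 => a _; rewrite -!big_split /=.
apply: big1 => b _; rewrite -!big_split /=; apply: big1 => c _ /=.
transitivity (u 0 a * v 0 b * w 0 c *
  (F a b (antipode c) + F b c (antipode a) + F c a (antipode b))); first by ring.
by rewrite Fcomp_Pmat_cyclic mulr0.
Qed.

End AntipodalStructure.

Section CirculantMetric.
Variable R : realType.
Variables (A B C : 'rV[R]_4 -> R) (x : 'rV[R]_4).
Local Notation g := (gABC A B C).
Local Notation dA k := (pd k A x).
Local Notation dB k := (pd k B x).
Local Notation dC k := (pd k C x).

Lemma gABC_sym m j : g m j = g j m.
Proof. by rewrite /gABC; elim/ord4_ind: m; elim/ord4_ind: j. Qed.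

Lemma gABC_antipode m j : g (antipode m) (antipode j) = g m j.
Proof. by rewrite /gABC; elim/ord4_ind: m; elim/ord4_ind: j. Qed.

Lemma gmat_gABC : gmat g x = circ (A x) (B x) (C x).
Proof. by apply/matrixP => m j; rewrite !mxE /gABC; case: ifP => //; case: ifP. Qed.

Lemma pd_gABC k m j : pd k (g m j) x = circ (dA k) (dB k) (dC k) m j.
Proof. by rewrite mxE /gABC; case: ifP => //; case: ifP. Qed.

Hypotheses (D0 : (A x + C x) ^+ 2 != 4 * B x ^+ 2) (e0 : A x != C x).

Lemma gmat_gABC_unit : gmat g x \in unitmx.
Proof. by rewrite gmat_gABC; case: (mulmx1_unit (mul_circ_inv D0 e0)). Qed.

Lemma ginv_gABC : ginv g x = circ_inv (A x) (B x) (C x).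
Proof.
have GH := mul_circ_inv D0 e0; have [Gu _] := mulmx1_unit GH.
by rewrite /ginv gmat_gABC -[invmx _]mulmx1 -GH mulmxA mulVmx // mul1mx.
Qed.

Lemma theta_gABC_ecoord l : let m := antipode l in
  theta g (Pmat R) x (ecoord R l) =
  ((A x + C x) * (dA m + dC m - dA l - dC l) - 4 * B x * (dB m - dB l))
    / ((A x + C x) ^+ 2 - 4 * B x ^+ 2)
  + (dA m + dA l - dC m - dC l) / (A x - C x).
Proof.
have D'0 : (A x + C x) ^+ 2 - 4 * B x ^+ 2 != 0 by rewrite subr_eq0.
have e'0 : A x - C x != 0 by rewrite subr_eq0.
have FE := Fcomp_Pmat gABC_sym gABC_antipode gmat_gABC_unit.
rewrite /theta ginv_gABC.
under eq_bigr do under eq_bigr do rewrite Fat_ecoord sum_ecoord FE /Gam1 !pd_gABC.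
rewrite sum_circ_christoffel.
by field; rewrite D'0 e'0.
Qed.

Lemma W2_gABC_at :
  (forall u v w : 'rV[R]_4,
    Fat g (Pmat R) x u v (Pv (Pmat R) w) + Fat g (Pmat R) x v w (Pv (Pmat R) u)
    + Fat g (Pmat R) x w u (Pv (Pmat R) v) = 0 /\ theta g (Pmat R) x w = 0) <->
  [/\ (A x + C x) * (dC o2 - dA o0) = 2 * B x * (dB o2 - dB o0),
      dC o2 - dA o0 = dA o2 - dC o0,
      (A x + C x) * (dC o3 - dA o1) = 2 * B x * (dB o3 - dB o1)
    & dC o3 - dA o1 = dA o3 - dC o1].
Proof.
have D'0 : (A x + C x) ^+ 2 - 4 * B x ^+ 2 != 0 by rewrite subr_eq0.
have e'0 : A x - C x != 0 by rewrite subr_eq0.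
have thetaE l := theta_gABC_ecoord l.
split=> [hW | [h1 h2 h3 h4] u v w].
  have T l := (hW 0 0 (ecoord R l)).2.
  have := T o0; have := T o1; have := T o2; have := T o3.
  rewrite !thetaE /= !antipodeE => T3 T2 T1 T0.
  have [e1 e2] := (theta_pair_eq0 D'0 e'0).1 (conj T0 T2).
  have [e3 e4] := (theta_pair_eq0 D'0 e'0).1 (conj T1 T3).
  exact: And4 e1 e2 e3 e4.
split; first exact: (Fat_Pmat_cyclic gABC_sym gABC_antipode gmat_gABC_unit).
have [T0 T2] := (theta_pair_eq0 D'0 e'0).2 (conj h1 h2).
have [T1 T3] := (theta_pair_eq0 D'0 e'0).2 (conj h3 h4).
have theta0 l : theta g (Pmat R) x (ecoord R l) = 0.
  by elim/ord4_ind: l; rewrite thetaE /= antipodeE; [exact: T0|exact: T1|exact: T2|exact: T3].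
by rewrite theta_decomp big1 // => l _; rewrite theta0 mulr0.
Qed.

End CirculantMetric.

Local Open Scope classical_set_scope.

Theorem theorem3p8 (R : realType) (U : set 'rV[R]_4) (A B C : 'rV[R]_4 -> R) :
  open U ->
  smooth_on U A -> smooth_on U B -> smooth_on U C ->
  (forall x, U x -> 0 < B x /\ B x < C x /\ C x < A x) ->
  (W2 (gABC A B C) (Pmat R) U <->
   forall x, U x ->
     let i1 := ix 0 in let i2 := ix 1 in let i3 := ix 2 in let i4 := ix 3 in
     [/\ (A x + C x) * (pd i3 C x - pd i1 A x) = 2 * B x * (pd i3 B x - pd i1 B x),
         pd i3 C x - pd i1 A x = pd i3 A x - pd i1 C x,
         (A x + C x) * (pd i4 C x - pd i2 A x) = 2 * B x * (pd i4 B x - pd i2 B x)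
       & pd i4 C x - pd i2 A x = pd i4 A x - pd i2 C x]).
Proof.
move=> _ _ _ _ hpos; case: ixE => -> -> -> ->.
split=> [hW x Ux | h x Ux]; have [B0 [BC CA]] := hpos x Ux;
  have [D0 e0] := circ_nondegenerate B0 BC CA.
  by apply/(W2_gABC_at D0 e0); exact: hW.
by apply/(W2_gABC_at D0 e0); exact: h.
Qed.
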